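(* Let $q>1$. For every integer $N\ge1$ and real $x\neq0$, $$H_{N+1}(x;q)=\frac{[N+1]_q}{N+1}\Big([2]_q x-\Big(\frac{2}{[2]_q}+(q-1)x^2\Big)D_x+\sum_{l=2}^{N}\frac{(1-q^2)^l x^{l+1}}{[2]_q^{\,l-1}[l+1]_q}D_x^{\,l}\Big)H_N(x;q),$$ where $D_x^l$ denotes the $l$-fold iterate of $D_x$ and the sum is empty for $N=1$.
   Context: For $n\ge 0$ let $[n]_q=\frac{q^n-1}{q-1}$, $[0]_q!=1$, $[n]_q!=[1]_q\cdots[n]_q$, and $e_q(z)=\sum_{n\ge0}z^n/[n]_q!$. The $q$-derivative is $D_xf(x)=\frac{f(qx)-f(x)}{(q-1)x}$. The $q$-Hermite polynomials $H_N(x;q)$ are defined by the identity of formal power series in $t$: $e^{-t^2}e_q([2]_q t x)=\sum_{N\ge0}H_N(x;q)\,t^N/[N]_q!$. *)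

From HB Require Import structures.
From mathcomp Require Import all_boot all_order all_algebra.
Set Implicit Arguments. Unset Strict Implicit. Unset Printing Implicit Defensive.
Import Order.TTheory GRing.Theory Num.Theory.
Local Open Scope ring_scope.

Definition qint (R : realFieldType) (q : R) (n : nat) : R := (q ^+ n - 1) / (q - 1).

Definition qfact (R : realFieldType) (q : R) (n : nat) : R :=
  \prod_(i < n) qint q i.+1.

Definition Dq (R : realFieldType) (q : R) (f : R -> R) : R -> R :=
  fun x => (f (q * x) - f x) / ((q - 1) * x).

(* coefficient of t^n in e^{-t^2} = sum_k (-1)^k t^{2k} / k! *)
Definition coef_exp_mt2 (R : realFieldType) (n : nat) : R :=
  if odd n then 0 else (-1) ^+ n./2 / (n./2)`!%:R.

(* coefficient of t^n in e_q(a t) = sum_n a^n t^n / [n]_q! *)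
Definition coef_eq (R : realFieldType) (q a : R) (n : nat) : R :=
  a ^+ n / qfact q n.

(* H_N(x;q) : [N]_q! times the coefficient of t^N in the (Cauchy) product
   e^{-t^2} e_q([2]_q t x) of formal power series in t. *)
Definition qHermite (R : realFieldType) (q : R) (N : nat) (x : R) : R :=
  qfact q N * \sum_(k < N.+1) coef_exp_mt2 R k * coef_eq q (qint q 2 * x) (N - k).

From HB Require Import structures.
From mathcomp Require Import all_boot all_order all_algebra.
From mathcomp Require Import ring zify.
Import Order.TTheory GRing.Theory Num.Theory.
Set Implicit Arguments. Unset Strict Implicit.
Local Open Scope ring_scope.

(* Both sides are polynomials in x, so we compare coefficients. The operator
   D_x^l maps x^j to [j]_q [j-1]_q ... [j-l+1]_q x^(j-l), and on x^j the
   weights of the sum collapse through the identity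
     sum_(l <= j) (1-q)^l [j]_q ... [j-l+1]_q / [l+1]_q = (j+1) / [j+1]_q,
   a telescoping sum of q-Pochhammer products. Hence the operator sends x^j to
   [2]_q (j+1)/[j+1]_q x^(j+1) - 2/[2]_q [j]_q x^(j-1), and the theorem becomes
   the three-term recurrence of the coefficients of H_N, which follows from
   the recurrence c_(m+2) = -2 c_m / (m+2) of the coefficients of e^(-t^2). *)

Lemma coef_exp_mt2SS (R : realFieldType) m :
  coef_exp_mt2 R m.+2 = - 2 / m.+2%:R * coef_exp_mt2 R m.
Proof.
rewrite /coef_exp_mt2 /= negbK; case: ifPn => [_|even_m]; first by rewrite mulr0.
have -> : m = (m./2).*2 by rewrite -[LHS]odd_double_half (negbTE even_m).
rewrite doubleK -doubleS -muln2 natrM factS natrM exprS.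
have fact_neq0 : (m./2)`!%:R != 0 :> R by rewrite pnatr_eq0 -lt0n fact_gt0.
by field; rewrite fact_neq0 addrC natr1 pnatr_eq0.
Qed.

Section QHermite.
Variables (R : realFieldType) (q : R).
Hypothesis hq : 1 < q.

Lemma subq1_neq0 : q - 1 != 0.
Proof. by rewrite subr_eq0 gt_eqF. Qed.

Lemma sub1q_neq0 : 1 - q != 0.
Proof. by rewrite subr_eq0 lt_eqF. Qed.

Lemma sub1qX_neq0 n : 1 - q ^+ n.+1 != 0.
Proof. by rewrite subr_eq0 lt_eqF // exprn_egt1. Qed.

Lemma qint_neq0 n : qint q n.+1 != 0.
Proof.
by rewrite /qint mulf_neq0 ?invr_eq0 ?subq1_neq0 // -opprB oppr_eq0 sub1qX_neq0.
Qed.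

Lemma qint2_neq0 : qint q 2 != 0.
Proof. exact: qint_neq0. Qed.

Lemma qint0 : qint q 0 = 0.
Proof. by rewrite /qint subrr mul0r. Qed.

Lemma qint1 : qint q 1 = 1.
Proof. by rewrite /qint divff ?subq1_neq0. Qed.

Lemma mul1Bq_qint n : (1 - q) * qint q n = 1 - q ^+ n.
Proof. by rewrite /qint -opprB mulNr mulrC mulfVK ?subq1_neq0 // opprB. Qed.

Lemma qfact_neq0 n : qfact q n != 0.
Proof. by apply/prodf_neq0 => i _; apply: qint_neq0. Qed.

Lemma qfactS n : qfact q n.+1 = qfact q n * qint q n.+1.
Proof. by rewrite /qfact big_ord_recr. Qed.

Definition qffact (j l : nat) : R := \prod_(i < l) qint q (j - i).

Definition qpoch (j l : nat) : R := \prod_(i < l) (1 - q ^+ (j - i)).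

Lemma qffactS j l : qffact j l.+1 = qffact j l * qint q (j - l).
Proof. by rewrite /qffact big_ord_recr. Qed.

Lemma qffact1 j : qffact j 1 = qint q j.
Proof. by rewrite /qffact big_ord1 subn0. Qed.

Lemma qffact_eq0 j l : (j < l)%N -> qffact j l = 0.
Proof.
elim: l => // l IHl; rewrite ltnS leq_eqVlt qffactS => /orP[/eqP ->|/IHl ->].
  by rewrite subnn qint0 mulr0.
by rewrite mul0r.
Qed.

Lemma qpochS j l : qpoch j l.+1 = qpoch j l * (1 - q ^+ (j - l)).
Proof. by rewrite /qpoch big_ord_recr. Qed.

Lemma qpochE j l : qpoch j l = (1 - q) ^+ l * qffact j l.
Proof.
elim: l => [|l IHl]; first by rewrite /qpoch /qffact !big_ord0 mulr1.
by rewrite qpochS IHl qffactS -mul1Bq_qint exprS; ring.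
Qed.

Lemma qpochSS j l : qpoch j.+1 l.+1 = (1 - q ^+ j.+1) * qpoch j l.
Proof. by rewrite /qpoch big_ord_recl subn0. Qed.

Lemma sum_qpoch n : \sum_(l < n) qpoch n l.+1 / (1 - q ^+ l.+1) = n%:R.
Proof.
elim: n => [|n IHn]; first by rewrite big_ord0.
have telescope l : (l <= n)%N -> qpoch n.+1 l.+1 / (1 - q ^+ l.+1) =
    qpoch n l.+1 / (1 - q ^+ l.+1) + (qpoch n l - qpoch n l.+1).
  move=> le_ln; rewrite qpochSS [qpoch n l.+1]qpochS.
  have -> : q ^+ n.+1 = q ^+ (n - l) * q ^+ l.+1 by rewrite -exprD addnS subnK.
  by field; rewrite sub1qX_neq0.
rewrite big_ord_recr /= (eq_bigr _ (fun (l : 'I_n) _ => telescope l (ltnW (ltn_ord l)))).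
rewrite big_split /= IHn -(big_mkord (fun _ => true) (fun l => qpoch n l - qpoch n l.+1)).
rewrite (telescope_sumr_eq (fun l => - qpoch n l)) // => [|l _].
  rewrite qpochSS /qpoch big_ord0 -natr1.
  by field; rewrite sub1qX_neq0.
by rewrite opprK addrC.
Qed.

Lemma sum_qffact j :
  \sum_(l < j.+1) (1 - q) ^+ l * qffact j l / qint q l.+1 = j.+1%:R / qint q j.+1.
Proof.
apply: (mulfI (qint_neq0 j)); rewrite [RHS]mulrC divfK ?qint_neq0 //.
rewrite -(sum_qpoch j.+1) mulr_sumr; apply: eq_bigr => l _.
rewrite qpochSS qpochE -!mul1Bq_qint.
by field; rewrite sub1q_neq0 qint_neq0.
Qed.

Lemma sum_qffact_widen j M : (j <= M)%N ->
  \sum_(l < M.+1) (1 - q) ^+ l * qffact j l / qint q l.+1 = j.+1%:R / qint q j.+1.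
Proof.
move=> le_jM; rewrite -sum_qffact.
rewrite -!(big_mkord (fun _ => true) (fun l => (1 - q) ^+ l * qffact j l / qint q l.+1)).
rewrite (big_cat_nat (leq0n j.+1)) //= [X in _ + X]big1_seq ?addr0 // => l /=.
by rewrite mem_index_iota => /andP[lt_jl _]; rewrite qffact_eq0 // mulr0 mul0r.
Qed.

Lemma qHermite_op_weight j N : (j <= N)%N ->
  qint q 2 - (q - 1) * qint q j
  + \sum_(2 <= l < N.+1) (1 - q ^+ 2) ^+ l / (qint q 2 ^+ l.-1 * qint q l.+1) * qffact j l
  = qint q 2 * j.+1%:R / qint q j.+1.
Proof.
case: N => [|n] le_jN.
  move: le_jN; rewrite leqn0 => /eqP ->.
  by rewrite big_geq // qint0 qint1 mulr0 subr0 addr0 mulr1 divr1.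
have weight_coef l : (1 < l)%N ->
    (1 - q ^+ 2) ^+ l / (qint q 2 ^+ l.-1 * qint q l.+1) * qffact j l
    = qint q 2 * ((1 - q) ^+ l * qffact j l / qint q l.+1).
  case: l => [|k] // _; rewrite -mul1Bq_qint exprMn /= [qint q 2 ^+ k.+1]exprS.
  by field; rewrite expf_neq0 ?qint_neq0.
rewrite -mulrA -(sum_qffact_widen le_jN).
rewrite (eq_big_nat _ _ (fun l hl => weight_coef l (elimT andP hl).1)) -mulr_sumr.
rewrite -(big_mkord (fun _ => true) (fun l => (1 - q) ^+ l * qffact j l / qint q l.+1)).
rewrite [in RHS]big_ltn // [in RHS]big_ltn // /qffact big_ord0 -/(qffact j 1) qffact1 qint1.
by field; rewrite qint_neq0.
Qed.

Lemma iter_Dq_sum (f : R -> R) (a : nat -> R) M l y :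
    f =1 (fun z => \sum_(j < M) a j * z ^+ j) -> y != 0 ->
  iter l (Dq q) f y = \sum_(j < M) a j * qffact j l * y ^+ j / y ^+ l.
Proof.
move=> fE; elim: l y => [|l IHl] y y_neq0.
  by rewrite /= fE; apply: eq_bigr => j _; rewrite /qffact big_ord0 mulr1 divr1.
have q_neq0 : q != 0 by rewrite gt_eqF // (lt_trans ltr01 hq).
rewrite iterS /Dq !IHl ?mulf_neq0 // -sumrB mulr_suml; apply: eq_bigr => j _.
rewrite qffactS; have [le_lj|lt_jl] := leqP l j; last first.
  by rewrite qffact_eq0 // !(mulr0, mul0r) subrr mul0r.
rewrite -(subnK le_lj) addnK /qint !exprD !exprMn exprS.
by field; rewrite y_neq0 subq1_neq0 !expf_neq0.
Qed.

Lemma qHermite_op_sum (f : R -> R) (a : nat -> R) N x :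
    f =1 (fun z => \sum_(j < N.+1) a j * z ^+ j) -> x != 0 ->
  qint q 2 * x * f x
  - (2 / qint q 2 + (q - 1) * x ^+ 2) * Dq q f x
  + \sum_(2 <= l < N.+1)
      ((1 - q ^+ 2) ^+ l * x ^+ l.+1) / (qint q 2 ^+ l.-1 * qint q l.+1)
        * iter l (Dq q) f x
  = \sum_(j < N.+1) a j * (qint q 2 * j.+1%:R / qint q j.+1) * x ^+ j.+1
    - 2 / qint q 2 * \sum_(j < N.+1) a j * qint q j * x ^+ j / x.
Proof.
move=> fE x_neq0; change (Dq q f x) with (iter 1 (Dq q) f x).
rewrite fE (iter_Dq_sum _ fE x_neq0).
under eq_big_nat => l _ do rewrite (iter_Dq_sum _ fE x_neq0) mulr_sumr.
rewrite exchange_big /= !mulr_sumr -!sumrB -big_split /=; apply: eq_bigr => j _.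
rewrite -(qHermite_op_weight (ltnSE (ltn_ord j))) qffact1.
rewrite (eq_bigr (fun l => a j * x ^+ j.+1 *
  ((1 - q ^+ 2) ^+ l / (qint q 2 ^+ l.-1 * qint q l.+1) * qffact j l))) => [|l _].
  by rewrite -mulr_sumr expr1 expr2 (exprS x j); field; rewrite x_neq0 qint2_neq0.
by rewrite (exprS x j) (exprS x l); field; rewrite qint_neq0 !expf_neq0 ?qint2_neq0.
Qed.

Definition qHermite_coef (N j : nat) : R :=
  if (j <= N)%N then qfact q N * coef_exp_mt2 R (N - j) * qint q 2 ^+ j / qfact q j
  else 0.

Lemma qHermite_coef_eq0 N j : (N < j)%N -> qHermite_coef N j = 0.
Proof. by rewrite /qHermite_coef ltnNge => /negbTE ->. Qed.

Lemma qHermiteE N y : qHermite q N y = \sum_(j < N.+1) qHermite_coef N j * y ^+ j.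
Proof.
rewrite /qHermite mulr_sumr (reindex_inj rev_ord_inj) /=; apply: eq_bigr => j _.
have le_jN : (j <= N)%N by rewrite -ltnS.
rewrite /qHermite_coef /coef_eq le_jN subSS subKn //.
by rewrite exprMn; ring.
Qed.

Lemma qHermite_coefS N j :
  qHermite_coef N.+1 j.+1 = qint q N.+1 / N.+1%:R *
    (qHermite_coef N j * (qint q 2 * j.+1%:R / qint q j.+1)
     - 2 / qint q 2 * (qHermite_coef N j.+2 * qint q j.+2)).
Proof.
have [le_jN|lt_Nj] := leqP j N; last first.
  have lt_Nj2 : (N < j.+2)%N by lia.
  rewrite (qHermite_coef_eq0 (lt_Nj : (N.+1 < j.+1)%N)) (qHermite_coef_eq0 lt_Nj).
  by rewrite (qHermite_coef_eq0 lt_Nj2) !mul0r mulr0 subrr mulr0.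
rewrite /qHermite_coef ltnS le_jN subSS !qfactS.
have [le_j2N|lt_Nj2] := leqP j.+2 N.
  have NjE : (N - j = (N - j.+2).+2)%N by lia.
  have jE : j.+1%:R = N.+1%:R - (N - j.+2).+2%:R :> R.
    by rewrite -natrB; [congr _%:R; lia | lia].
  rewrite NjE coef_exp_mt2SS jE !exprS.
  by field; rewrite !qint_neq0 qfact_neq0 -natrD nat1r !pnatr_eq0.
have [NE|NE] : N = j \/ N = j.+1 by lia.
  rewrite NE subnn exprS.
  by field; rewrite !qint_neq0 qfact_neq0 nat1r pnatr_eq0.
by rewrite NE subSnn /coef_exp_mt2 /= !mulr0 !mul0r mulr0 subrr mulr0.
Qed.

Lemma qHermite_coef0 N :
  qHermite_coef N.+1 0 =
    - (qint q N.+1 / N.+1%:R * (2 / qint q 2 * (qHermite_coef N 1 * qint q 1))).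
Proof.
case: N => [|n].
  rewrite (@qHermite_coef_eq0 0 1) // /qHermite_coef /coef_exp_mt2 /=.
  by rewrite !mulr0 !mul0r !mulr0 oppr0.
rewrite /qHermite_coef /= subn0 subn1 /= coef_exp_mt2SS qfactS /qfact big_ord1 big_ord0.
by rewrite qint1 expr0 expr1; field; rewrite qint_neq0 -natrD pnatr_eq0.
Qed.

Lemma sum_qHermite_coef_shift N x : x != 0 ->
  \sum_(j < N.+1) qHermite_coef N j * qint q j * x ^+ j / x
  = qHermite_coef N 1 * qint q 1
    + \sum_(j < N.+1) qHermite_coef N j.+2 * qint q j.+2 * x ^+ j.+1.
Proof.
move=> x_neq0.
transitivity (\sum_(j < N.+3) qHermite_coef N j * qint q j * x ^+ j / x).
  by rewrite 2![in RHS]big_ord_recr /= !qHermite_coef_eq0 // !mul0r !addr0.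
rewrite 2!big_ord_recl /= qint0 mulr0 !mul0r add0r expr1 mulfK //.
congr (_ + _); apply: eq_bigr => j _.
by rewrite /bump !add1n (exprS x j.+1); field.
Qed.

End QHermite.

Theorem mainTheorem5 (R : realFieldType) (q : R) (hq : 1 < q) (N : nat)
  (hN : (1 <= N)%N) (x : R) (hx : x != 0) :
  qHermite q N.+1 x =
  qint q N.+1 / N.+1%:R *
    ( qint q 2 * x * qHermite q N x
      - (2 / qint q 2 + (q - 1) * x ^+ 2) * Dq q (qHermite q N) x
      + \sum_(2 <= l < N.+1)
          ((1 - q ^+ 2) ^+ l * x ^+ l.+1) / (qint q 2 ^+ l.-1 * qint q l.+1)
            * iter l (Dq q) (qHermite q N) x ).
Proof.
rewrite (qHermite_op_sum hq (qHermiteE q N) hx) (sum_qHermite_coef_shift q N hx).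
rewrite qHermiteE big_ord_recl (qHermite_coef0 hq) expr0 mulr1.
set K := qint q N.+1 / N.+1%:R.
rewrite (eq_bigr (fun j : 'I_N.+1 =>
   K * (qHermite_coef q N j * (qint q 2 * j.+1%:R / qint q j.+1) * x ^+ j.+1)
   - K * (2 / qint q 2) * (qHermite_coef q N j.+2 * qint q j.+2 * x ^+ j.+1))) => [|j _].
  rewrite sumrB -!mulr_sumr.
  by move: (\sum_(i < N.+1) _) (\sum_(i < N.+1) _) => S1 S2; ring.
by rewrite lift0 (qHermite_coefS hq) -/K; ring.
Qed.
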